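(* Let $n,m\ge 2$. Suppose there exists a total $2$-dominating set $S$ of $K_n\Box K_m$ of minimum cardinality (i.e. $|S|=\gamma_{2t}(K_n\Box K_m)$) such that $S\cap(\{v\}\times V(K_m))\neq\emptyset$ for every $v\in V(K_n)$ and $S\cap(V(K_n)\times\{w\})\neq\emptyset$ for every $w\in V(K_m)$. Then \[ \gamma_{2t}(K_{n+4}\Box K_{m+4})=\gamma_{2t}(K_n\Box K_m)+6. \]
   Context: For a graph $G=(V,E)$, a set $S\subseteq V$ is a total $2$-dominating set if every vertex of $V$ (including those in $S$) is adjacent to at least $2$ vertices of $S$; $\gamma_{2t}(G)$ is the minimum cardinality of such a set. $G\Box H$ denotes the Cartesian product: vertex set $V(G)\times V(H)$, with $(u_1,v_1)\sim(u_2,v_2)$ iff either $u_1=u_2$ and $v_1\sim v_2$, or $v_1=v_2$ and $u_1\sim u_2$. $K_n$ is the complete graph on $n$ vertices. *)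

From mathcomp Require Import all_boot.
Set Implicit Arguments. Unset Strict Implicit. Unset Printing Implicit Defensive.

Definition complete_rel (n : nat) : rel 'I_n := fun x y => x != y.

Definition cart_rel (T1 T2 : finType) (e1 : rel T1) (e2 : rel T2) : rel (T1 * T2) :=
  fun u v => ((u.1 == v.1) && e2 u.2 v.2) || ((u.2 == v.2) && e1 u.1 v.1).

Definition rook_rel (n m : nat) : rel ('I_n * 'I_m) :=
  cart_rel (@complete_rel n) (@complete_rel m).

Arguments rook_rel : clear implicits.

Definition total2dom (T : finType) (e : rel T) (S : {set T}) : bool :=
  [forall x, 2 <= #|[set y in S | e x y]|].

(* gamma_{2t}(G): minimum cardinality of a total 2-dominating set
   (if none exists, the value is #|V|, irrelevant for our use). *)
Definition gamma2t (T : finType) (e : rel T) : nat :=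
  #|arg_min [set: T] (total2dom e) (fun S : {set T} => #|S|)|.

From mathcomp Require Import all_boot zify.
Set Implicit Arguments. Unset Strict Implicit. Unset Printing Implicit Defensive.

(* In K_N [] K_M every vertex x of a total 2-dominating set S sees two other
   vertices of S on its row and column, so (row count) + (column count) >= 4 at
   x. If S meets every line, double counting these inequalities, while tracking
   the lines that hold a single vertex of S, gives 4|S| >= 3(N + M), and
   equality forces 3M + 7N = 0 (mod 8); this lower bound is [rook_bound N M].
   If S misses a row, each column holds two vertices of S, so |S| >= 2M.
   Conversely, block-diagonal sums of K_1 [] K_3, K_3 [] K_1, crosses and a few
   sporadic blocks attain [rook_bound n m] whenever it is below 2 min(n, m),
   and two full rows always give 2m. The hypothesised minimum set of K_n [] K_m
   meets every line, so adding the 4 x 4 block K_1 [] K_3 + K_3 [] K_1 of size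
   6 gives the upper bound, which the lower bounds match because
   [rook_bound (n + 4) (m + 4) = rook_bound n m + 6]. *)

Lemma card_fibers (T K : finType) (f : T -> K) (A : {set T}) :
  #|A| = \sum_k #|[set y in A | f y == k]|.
Proof.
rewrite -sum1_card (partition_big f predT) //=; apply: eq_bigr => k _.
by rewrite -sum1_card; apply: eq_bigl => y; rewrite inE.
Qed.

Lemma sum_nat_of_bool (K : finType) (b : pred K) :
  \sum_k (b k : nat) = #|[set k | b k]|.
Proof.
rewrite -sum1_card [in RHS]big_mkcond /=; apply: eq_bigr => k _.
by rewrite inE; case: (b k).
Qed.

Lemma leq_cardsU (T : finType) (A B : {set T}) : #|A :|: B| <= #|A| + #|B|.
Proof. by rewrite cardsU leq_subr. Qed.

Section LineCounts.
Variables (T K L : finType) (S : {set T}) (f : T -> K) (g : T -> L).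
Let fcount k := #|[set y in S | f y == k]|.
Let gcount l := #|[set y in S | g y == l]|.
Let fsingles := #|[set k | fcount k == 1]|.
Let gsingles := #|[set l | gcount l == 1]|.
Hypothesis fcount_gcount_ge4 : forall y, y \in S -> 4 <= fcount (f y) + gcount (g y).
Hypothesis gcount_gt0 : forall l, 0 < gcount l.

Let lonely_set := [set y in S | fcount (f y) == 1].
Let lonely l := #|[set y in lonely_set | g y == l]|.

Let lonely_le l : lonely l <= gcount l.
Proof.
by apply/subset_leq_card/subsetP => y; rewrite !inE => /andP[/andP[-> _] ->].
Qed.

Let lonely_gt0 l : 0 < lonely l -> 3 <= gcount l.
Proof.
case/card_gt0P => y; rewrite !inE => /andP[/andP[yS /eqP f1] /eqP <-].
by have := fcount_gcount_ge4 yS; rewrite f1.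
Qed.

Let sum_lonely : \sum_l lonely l = fsingles.
Proof.
rewrite -(card_fibers g) (card_fibers f) /fsingles -sum_nat_of_bool.
apply: eq_bigr => k _; have [f1|f1] := eqVneq (fcount k) 1.
  transitivity (fcount k); last by rewrite f1.
  apply: eq_card => y; rewrite !inE.
  by case: (f y =P k) => [->|]; rewrite ?f1 ?andbT ?andbF.
apply/eqP; rewrite cards_eq0; apply/eqP/setP => y; rewrite !inE.
by case: (f y =P k) => [->|]; rewrite ?(negbTE f1) ?andbF.
Qed.

Let lonely_leqif l :
  3 + lonely l <= 2 * gcount l + (gcount l == 1) ?= iff (3 * gcount l == 2 * lonely l + 3).
Proof.
apply/leqifP; have := lonely_le l; have := @lonely_gt0 l; have := gcount_gt0 l.
by case: ifP => /eqP; lia.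
Qed.

Let line_count_leqif :
  3 * #|L| + fsingles <= 2 * #|S| + gsingles
  ?= iff [forall l, 3 * gcount l == 2 * lonely l + 3].
Proof.
have -> : 3 * #|L| + fsingles = \sum_l (3 + lonely l).
  by rewrite big_split /= sum_nat_const sum_lonely mulnC.
have -> : 2 * #|S| + gsingles = \sum_l (2 * gcount l + (gcount l == 1)).
  by rewrite /gsingles big_split /= sum_nat_of_bool -big_distrr /= -card_fibers.
by apply: leqif_sum => l _; apply: lonely_leqif.
Qed.

Lemma line_count_le : 3 * #|L| + fsingles <= 2 * #|S| + gsingles.
Proof. exact: line_count_leqif. Qed.

Lemma line_count_eq :
  3 * #|L| + fsingles = 2 * #|S| + gsingles -> 2 * fsingles + 3 * #|L| = 3 * #|S|.
Proof.
move/eqP; rewrite line_count_leqif => /forallP termwise.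
have -> : 3 * #|S| = \sum_l 3 * gcount l by rewrite -big_distrr /= -card_fibers.
rewrite (eq_bigr _ (fun l _ => eqP (termwise l))) big_split /= -big_distrr /=.
by rewrite sum_lonely sum_nat_const [_ * 3]mulnC.
Qed.

End LineCounts.

Section Total2Dom.
Variables (T : finType) (e : rel T).
Implicit Types S : {set T}.

Lemma nbr_card_gt1 S x y1 y2 :
  y1 \in S -> y2 \in S -> y1 != y2 -> e x y1 -> e x y2 ->
  1 < #|[set y in S | e x y]|.
Proof.
by move=> y1S y2S ne e1 e2; apply/card_gt1P; exists y1, y2; rewrite !inE y1S y2S e1 e2.
Qed.

Lemma total2domS S S' : S \subset S' -> total2dom e S -> total2dom e S'.
Proof.
move=> sSS' /forallP tS; apply/forallP => x; apply: leq_trans (tS x) _.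
by apply/subset_leq_card/subsetP => y; rewrite !inE => /andP[/(subsetP sSS') -> ->].
Qed.

Lemma gamma2t_le S : total2dom e S -> gamma2t e <= #|S|.
Proof.
move=> tS; rewrite /gamma2t.
by case: (arg_minnP (fun A : {set T} => #|A|) (total2domS (subsetT S) tS)) => A _; apply.
Qed.

Lemma gamma2t_attained S : total2dom e S -> exists2 A, total2dom e A & #|A| = gamma2t e.
Proof.
move=> tS; rewrite /gamma2t.
by case: (arg_minnP (fun A : {set T} => #|A|) (total2domS (subsetT S) tS)) => A; exists A.
Qed.

Lemma nbr_card_imset (T' : finType) (e' : rel T') (h : T -> T') S (S' : {set T'}) x :
  injective h -> (forall y, e' (h x) (h y) = e x y) -> h @: S \subset S' ->
  #|[set y in S | e x y]| <= #|[set y in S' | e' (h x) y]|.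
Proof.
move=> h_inj he sS; rewrite -(card_imset _ h_inj); apply/subset_leq_card/subsetP.
move=> z /imsetP[y]; rewrite inE => /andP[yS exy] ->.
by rewrite inE he exy (subsetP sS) ?imset_f.
Qed.

End Total2Dom.

Lemma rookE n m (a c : 'I_n) (b d : 'I_m) :
  rook_rel n m (a, b) (c, d) = (a == c) && (b != d) || (b == d) && (a != c).
Proof. by []. Qed.

Lemma rook_rel_swap n m (x y : 'I_n * 'I_m) :
  rook_rel m n (swap_pair x) (swap_pair y) = rook_rel n m x y.
Proof. by move: x y => [a b] [c d]; rewrite /= !rookE orbC. Qed.

Lemma total2dom_swap n m (S : {set 'I_n * 'I_m}) :
  total2dom (rook_rel n m) S -> total2dom (rook_rel m n) (swap_pair @: S).
Proof.
move=> /forallP tS; apply/forallP => x; rewrite -[x]swap_pairK.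
apply: leq_trans (tS (swap_pair x)) (nbr_card_imset _ _ _) => [|y|]; rewrite ?rook_rel_swap //.
exact: can_inj swap_pairK.
Qed.

Section RookLowerBound.
Variables N M : nat.
Implicit Types S : {set 'I_N * 'I_M}.

Definition row_count S (i : 'I_N) := #|[set y in S | y.1 == i]|.
Definition col_count S (j : 'I_M) := #|[set y in S | y.2 == j]|.

Lemma rook_nbr_card_le S x :
  #|[set y in S | rook_rel N M x y]| <=
  #|[set y in S | y.1 == x.1] :\ x| + #|[set y in S | y.2 == x.2] :\ x|.
Proof.
apply: leq_trans (leq_cardsU _ _); apply/subset_leq_card/subsetP => -[c d].
case: x => a b; rewrite !inE rookE /= xpair_eqE.
by case/andP => -> /orP[] /andP[/eqP-> ne]; rewrite eqxx /= ?andbT eq_sym ne ?orbT.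
Qed.

Lemma line_counts_ge4 S x :
  total2dom (rook_rel N M) S -> x \in S -> 4 <= row_count S x.1 + col_count S x.2.
Proof.
move=> /forallP /(_ x) tx xS; have := leq_trans tx (rook_nbr_card_le S x).
rewrite /row_count /col_count (cardsD1 x [set y in S | y.1 == x.1]).
rewrite (cardsD1 x [set y in S | y.2 == x.2]) !inE xS !eqxx /=.
by move=> h; rewrite addnACA; apply: leq_add (leqnn 2) h.
Qed.

Lemma col_count_ge2 S i j :
  total2dom (rook_rel N M) S -> row_count S i = 0 -> 2 <= col_count S j.
Proof.
move=> /forallP /(_ (i, j)) tij /eqP; rewrite cards_eq0 => /eqP row0.
apply: leq_trans tij (leq_trans (rook_nbr_card_le S (i, j)) _).
by rewrite /= row0 set0D cards0 add0n subset_leq_card ?subD1set.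
Qed.

Lemma card_ge_of_empty_row S i :
  total2dom (rook_rel N M) S -> row_count S i = 0 -> 2 * M <= #|S|.
Proof.
move=> tS row0; rewrite (card_fibers snd S).
apply: (@leq_trans (\sum_(j < M) 2)); first by rewrite sum_nat_const card_ord mulnC.
by apply: leq_sum => j _; apply: col_count_ge2 tS row0.
Qed.

End RookLowerBound.

Lemma col_count_swap n m (S : {set 'I_n * 'I_m}) j :
  row_count (swap_pair @: S) j = col_count S j.
Proof.
have swap_inj := can_inj (@swap_pairK 'I_n 'I_m).
rewrite /row_count /col_count -[RHS](card_imset _ swap_inj).
by apply: eq_card => y; rewrite -[y]swap_pairK !inE !(mem_imset _ _ swap_inj) inE.
Qed.

Lemma card_ge_of_empty_col n m (S : {set 'I_n * 'I_m}) j :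
  total2dom (rook_rel n m) S -> col_count S j = 0 -> 2 * n <= #|S|.
Proof.
move=> tS; rewrite -col_count_swap => /(card_ge_of_empty_row (total2dom_swap tS)).
by rewrite card_imset //; apply: can_inj swap_pairK.
Qed.

(* Meeting every line is what makes block sums work: a vertex outside the
   diagonal blocks sees one vertex in each of the two blocks it lies next to. *)
Definition rook_t2d n m k := exists S : {set 'I_n * 'I_m},
  [/\ total2dom (rook_rel n m) S, forall i, exists j, (i, j) \in S,
      forall j, exists i, (i, j) \in S & #|S| <= k].

Lemma rook_t2d_weaken n m k k' : k <= k' -> rook_t2d n m k -> rook_t2d n m k'.
Proof.
by move=> le_kk' [S [tS rows cols cardS]]; exists S; split; rewrite // (leq_trans cardS).
Qed.

Lemma rook_t2d_swap n m k : rook_t2d n m k -> rook_t2d m n k.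
Proof.
have swap_inj := can_inj (@swap_pairK 'I_n 'I_m).
case=> S [tS rows cols cardS]; exists (swap_pair @: S); split.
- exact: total2dom_swap.
- by move=> j; have [i ijS] := cols j; exists i; rewrite (imset_f swap_pair ijS).
- by move=> i; have [j ijS] := rows i; exists j; rewrite (imset_f swap_pair ijS).
- by rewrite card_imset.
Qed.

Lemma rook_t2d_add n1 m1 k1 n2 m2 k2 :
  rook_t2d n1 m1 k1 -> rook_t2d n2 m2 k2 -> rook_t2d (n1 + n2) (m1 + m2) (k1 + k2).
Proof.
move=> [S1 [tS1 rows1 cols1 card1]] [S2 [tS2 rows2 cols2 card2]].
pose f1 (x : 'I_n1 * 'I_m1) := (lshift n2 x.1, lshift m2 x.2).
pose f2 (x : 'I_n2 * 'I_m2) := (rshift n1 x.1, rshift m1 x.2).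
have f1_inj : injective f1 by move=> [a b] [c d] /= [/val_inj -> /val_inj ->].
have f2_inj : injective f2 by move=> [a b] [c d] /= [/addnI/val_inj -> /addnI/val_inj ->].
set S := f1 @: S1 :|: f2 @: S2.
have inS1 x : x \in S1 -> f1 x \in S by move=> xS; rewrite inE imset_f.
have inS2 x : x \in S2 -> f2 x \in S by move=> xS; rewrite inE imset_f ?orbT.
exists S; split.
- apply/forallP => -[i j]; rewrite -(splitK i) -(splitK j).
  case: (split i) => a; case: (split j) => b /=.
  + apply: leq_trans (forallP tS1 (a, b)) (nbr_card_imset f1_inj _ _) => [[c d]|].
      by rewrite /= !rookE !eq_shift.
    by rewrite subsetUl.
  + have [j1 aS1] := rows1 a; have [i2 bS2] := cols2 b.
    apply: (nbr_card_gt1 (inS1 _ aS1) (inS2 _ bS2)).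
    * by rewrite /f1 /f2 /= xpair_eqE !eq_shift.
    * by rewrite /f1 /= rookE !eq_shift eqxx.
    * by rewrite /f2 /= rookE !eq_shift eqxx.
  + have [j2 aS2] := rows2 a; have [i1 bS1] := cols1 b.
    apply: (nbr_card_gt1 (inS2 _ aS2) (inS1 _ bS1)).
    * by rewrite /f1 /f2 /= xpair_eqE !eq_shift.
    * by rewrite /f2 /= rookE !eq_shift eqxx.
    * by rewrite /f1 /= rookE !eq_shift eqxx orbT.
  + apply: leq_trans (forallP tS2 (a, b)) (nbr_card_imset f2_inj _ _) => [[c d]|].
      by rewrite /= !rookE !eq_shift.
    by rewrite subsetUr.
- move=> i; rewrite -(splitK i); case: (split i) => a /=.
  + by have [j aS] := rows1 a; exists (lshift m2 j); apply: inS1 aS.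
  + by have [j aS] := rows2 a; exists (rshift m1 j); apply: inS2 aS.
- move=> j; rewrite -(splitK j); case: (split j) => b /=.
  + by have [i bS] := cols1 b; exists (lshift n2 i); apply: inS1 bS.
  + by have [i bS] := cols2 b; exists (rshift n1 i); apply: inS2 bS.
- by rewrite (leq_trans (leq_cardsU _ _)) // !card_imset // leq_add.
Qed.

Lemma ord_other k (j : 'I_k) : 2 <= k -> exists j' : 'I_k, j' != j.
Proof.
move=> k2; have : 0 < #|[set~ j]| by rewrite cardsC1 card_ord; lia.
by case/card_gt0P => j'; rewrite !inE; exists j'.
Qed.

Lemma ord_other2 k (j : 'I_k) : 3 <= k ->
  exists j1 j2 : 'I_k, [/\ j1 != j, j2 != j & j1 != j2].
Proof.
move=> k3; have : 1 < #|[set~ j]| by rewrite cardsC1 card_ord; lia.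
by case/card_gt1P => j1 [j2 []]; rewrite !inE; exists j1, j2.
Qed.

Definition cross n m (i0 : 'I_n) (j0 : 'I_m) : {set 'I_n * 'I_m} :=
  setX [set i0] [set: 'I_m] :|: setX (~: [set i0]) [set j0].

Lemma in_cross n m (i0 : 'I_n) (j0 : 'I_m) x :
  (x \in cross i0 j0) = (x.1 == i0) || (x.2 == j0).
Proof. by case: x => a b; rewrite !inE; case: eqP. Qed.

Lemma rook_t2d_cross p q : (p == 1) || (3 <= p) -> 3 <= q -> rook_t2d p q (p + q - 1).
Proof.
move=> hp hq; have p0 : 0 < p by lia.
pose i0 : 'I_p := Ordinal p0; pose j0 : 'I_q := Ordinal (leq_trans (isT : 0 < 3) hq).
exists (cross i0 j0); split.
- apply/forallP => -[i j].
  have [->|ne_i] := eqVneq i i0.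
    have [j1 [j2 [ne1 ne2 ne12]]] := ord_other2 j hq.
    apply: (@nbr_card_gt1 _ _ _ _ (i0, j1) (i0, j2));
      by rewrite ?in_cross ?xpair_eqE ?rookE ?eqxx /= ?andbF ?orbF // eq_sym.
  have [->|ne_j] := eqVneq j j0.
    have p3 : 3 <= p by move: hp (ltn_ord i) (ltn_ord i0) ne_i; rewrite -val_eqE /=; lia.
    have [i1 [i2 [ne1 ne2 ne12]]] := ord_other2 i p3.
    apply: (@nbr_card_gt1 _ _ _ _ (i1, j0) (i2, j0));
      by rewrite ?in_cross ?xpair_eqE ?rookE ?eqxx /= ?orbT ?andbT ?andbF // eq_sym.
  apply: (@nbr_card_gt1 _ _ _ _ (i0, j) (i, j0));
    by rewrite ?in_cross ?xpair_eqE ?rookE ?eqxx /= ?andbF ?orbF ?orbT ?(eq_sym i0) ?(negbTE ne_i).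
- by move=> i; exists j0; rewrite in_cross eqxx orbT.
- by move=> j; exists i0; rewrite in_cross eqxx.
- rewrite (leq_trans (leq_cardsU _ _)) // !cardsX cardsC1 !cards1 cardsT !card_ord; lia.
Qed.

Lemma rook_t2d_row q : 3 <= q -> rook_t2d 1 q q.
Proof. by move=> hq; have := @rook_t2d_cross 1 q isT hq; rewrite add1n subn1. Qed.

Lemma rook_t2d_col p : 3 <= p -> rook_t2d p 1 p.
Proof. by move/rook_t2d_row/rook_t2d_swap. Qed.

Lemma rook_two_rows n m : 2 <= n -> 2 <= m ->
  exists2 S : {set 'I_n * 'I_m}, total2dom (rook_rel n m) S & #|S| = 2 * m.
Proof.
move=> hn hm; pose i0 : 'I_n := Ordinal (ltnW hn); have [i1 ne10] := ord_other i0 hn.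
exists (setX [set i0; i1] setT); last by rewrite cardsX cards2 eq_sym ne10 cardsT card_ord.
apply/forallP => -[i j]; have [j' ne_j] := ord_other j hm.
have [i01|] := boolP (i \in [set i0; i1]).
  have [i' i'01 ne_i] : exists2 i', i' \in [set i0; i1] & i' != i.
    by move: i01; rewrite !inE => /orP[] /eqP->; [exists i1 | exists i0];
      rewrite ?inE ?eqxx ?orbT // eq_sym.
  apply: (@nbr_card_gt1 _ _ _ _ (i', j) (i, j'));
    by rewrite ?in_setX ?i'01 ?i01 ?inE ?xpair_eqE ?rookE ?eqxx /= ?andbF ?orbF ?orbT
      ?(negbTE ne_i) ?(eq_sym i) ?(eq_sym j) /=.
rewrite !inE negb_or => /andP[ne0 ne1].
apply: (@nbr_card_gt1 _ _ _ _ (i0, j) (i1, j));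
  by rewrite ?in_setX ?inE ?eqxx ?orbT ?xpair_eqE ?rookE ?eqxx /=
    ?(eq_sym i0) ?(negbTE ne10) ?andbF.
Qed.

Lemma gamma2t_rook_le_double n m : 2 <= n -> 2 <= m ->
  gamma2t (rook_rel n m) <= 2 * minn n m.
Proof.
move=> hn hm; have [S tS cardS] := rook_two_rows hn hm.
have [S' tS' cardS'] := rook_two_rows hm hn.
have := gamma2t_le tS; have := gamma2t_le (total2dom_swap tS').
by rewrite card_imset ?cardS ?cardS'; [lia | apply: can_inj swap_pairK].
Qed.

(* ceil(3(n + m) / 4), plus one when 4 divides n + m but the equality case of
   the double counting (3m + 7n = 0 mod 8) is impossible. *)
Definition rook_bound n m :=
  (3 * (n + m) + 3) %/ 4 + ((n + m) %% 4 == 0) && ((3 * m + 7 * n) %% 8 != 0).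

Lemma rook_bound_sym n m : rook_bound n m = rook_bound m n.
Proof. rewrite /rook_bound; lia. Qed.

Lemma rook_bound_add13 n m : rook_bound (n + 1) (m + 3) = rook_bound n m + 3.
Proof. rewrite /rook_bound; lia. Qed.

Lemma rook_bound_add44 n m : rook_bound (n + 4) (m + 4) = rook_bound n m + 6.
Proof. rewrite /rook_bound; lia. Qed.

Lemma rook_bound_le n m : 4 * rook_bound n m <= 3 * (n + m) + 7.
Proof. rewrite /rook_bound; lia. Qed.

Lemma rook_bound_le_card N M (S : {set 'I_N * 'I_M}) :
  total2dom (rook_rel N M) S -> (forall i, 0 < row_count S i) ->
  (forall j, 0 < col_count S j) -> rook_bound N M <= #|S|.
Proof.
move=> tS rows cols.
have deg x : x \in S -> 4 <= row_count S x.1 + col_count S x.2 by apply: line_counts_ge4.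
have deg' x : x \in S -> 4 <= col_count S x.2 + row_count S x.1 by rewrite addnC; apply: deg.
have le1 := line_count_le (f := fst) (g := snd) deg cols.
have le2 := line_count_le (f := snd) (g := fst) deg' rows.
have eq1 := line_count_eq (f := fst) (g := snd) deg cols.
(* The lemmas produce convertible but syntactically different [#|S|], which
   [lia] would treat as distinct atoms. *)
move: le1 le2 eq1; rewrite !card_ord /rook_bound; set s := #|S|; lia.
Qed.

Definition below_double n m := rook_bound n m < 2 * minn n m.
Definition short_line n m :=
  (n == 1) && (3 <= m <= rook_bound n m) || (m == 1) && (3 <= n <= rook_bound n m).
Definition buildable n m := below_double n m || short_line n m.
(* The pairs n <= m with [below_double n m] from which one cannot remove a
   K_1 [] K_3 block and stay [buildable]. *)
Definition base_pairs := [:: (3, 3); (4, 5); (5, 5); (5, 6); (6, 6); (7, 7)].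

Lemma buildable_sym n m : buildable n m = buildable m n.
Proof.
by rewrite /buildable /below_double /short_line rook_bound_sym minnC (orbC ((m == 1) && _)).
Qed.

Lemma buildable_peel n m : n + 1 <= m + 3 -> below_double (n + 1) (m + 3) ->
  (n + 1, m + 3) \notin base_pairs -> buildable n m.
Proof.
move=> le_nm hb nbase; have [far|near] := boolP ((n <= m) || (11 <= n)).
  apply/orP; left; move: hb; rewrite /below_double rook_bound_add13.
  by have := rook_bound_le n m; lia.
pose peel_ok n m := below_double (n + 1) (m + 3) ==> ((n + 1, m + 3) \notin base_pairs) ==>
  buildable n m.
have small : all (fun m => peel_ok m.+1 m && peel_ok m.+2 m) (iota 0 10) by [].
have /andP[ok1 ok2] : peel_ok m.+1 m && peel_ok m.+2 m.
  by apply: (allP small); rewrite mem_iota; lia.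
have [En|En] : n = m.+1 \/ n = m.+2 by lia.
  by move: ok1; rewrite /peel_ok -En hb nbase.
by move: ok2; rewrite /peel_ok -En hb nbase.
Qed.

Lemma rook_t2d_base n m : (n, m) \in base_pairs -> rook_t2d n m (rook_bound n m).
Proof.
have cross33 : rook_t2d 3 3 5 := @rook_t2d_cross 3 3 isT isT.
have two_stars p q : 3 <= p -> 3 <= q -> rook_t2d (1 + p) (q + 1) (q + p).
  by move=> hp hq; apply: rook_t2d_add (rook_t2d_row hq) (rook_t2d_col hp).
case/predU1P => [[-> ->] //|]; case/predU1P => [[-> ->]|]; first exact: two_stars 3 4 isT isT.
case/predU1P => [[-> ->]|]; first exact: two_stars 4 4 isT isT.
case/predU1P => [[-> ->]|]; first exact: two_stars 4 5 isT isT.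
case/predU1P => [[-> ->]|]; first exact: two_stars 5 5 isT isT.
case/predU1P => [[-> ->]|//]; exact: rook_t2d_add cross33 (two_stars 3 3 isT isT).
Qed.

Lemma rook_t2d_bound n m : buildable n m -> rook_t2d n m (rook_bound n m).
Proof.
have [s] := ubnP (n + m); elim: s n m => // s IH n m.
wlog le_nm : n m / n <= m.
  move=> wlog; case: (leqP n m) => [|/ltnW le_mn]; first exact: wlog.
  rewrite addnC buildable_sym rook_bound_sym => lt_s /(wlog _ _ le_mn lt_s).
  exact: rook_t2d_swap.
rewrite ltnS => lt_s /orP[hb|].
  have [/rook_t2d_base //|nbase] := boolP ((n, m) \in base_pairs).
  have [n1 m3] : 0 < n /\ 3 <= m by move: hb; rewrite /below_double /rook_bound; lia.
  rewrite -(subnK n1) -(subnK m3) rook_bound_add13 in hb nbase le_nm *.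
  apply: rook_t2d_add (rook_t2d_row (leqnn 3)); apply: IH; first lia.
  exact: buildable_peel.
by case/orP => /andP[/eqP-> /andP[h3 hle]];
  [apply: rook_t2d_weaken hle (rook_t2d_row h3) | apply: rook_t2d_weaken hle (rook_t2d_col h3)].
Qed.

Lemma gamma2t_rook_le_bound n m : 2 <= n -> 2 <= m ->
  gamma2t (rook_rel n m) <= rook_bound n m.
Proof.
move=> hn hm; have [hb|] := boolP (below_double n m).
  have [S [tS _ _ cardS]] : rook_t2d n m (rook_bound n m).
    by apply: rook_t2d_bound; rewrite /buildable hb.
  exact: leq_trans (gamma2t_le tS) cardS.
rewrite /below_double -leqNgt; apply: leq_trans; exact: gamma2t_rook_le_double.
Qed.

Theorem theorem12 (n m : nat) (hn : 2 <= n) (hm : 2 <= m) :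
  (exists S : {set 'I_n * 'I_m},
      [/\ total2dom (rook_rel n m) S,
          #|S| = gamma2t (rook_rel n m),
          (forall v : 'I_n, exists w : 'I_m, (v, w) \in S)
        & (forall w : 'I_m, exists v : 'I_n, (v, w) \in S)]) ->
  gamma2t (rook_rel (n + 4) (m + 4)) = gamma2t (rook_rel n m) + 6.
Proof.
case=> S0 [tS0 cardS0 rows0 cols0].
have [S1 [tS1 _ _ cardS1]] : rook_t2d (n + 4) (m + 4) (gamma2t (rook_rel n m) + 6).
  apply: rook_t2d_add; first by exists S0; rewrite cardS0.
  exact: rook_t2d_add (rook_t2d_row (leqnn 3)) (rook_t2d_col (leqnn 3)).
have [S tS cardS] := gamma2t_attained tS1.
apply/eqP; rewrite eqn_leq (leq_trans (gamma2t_le tS1) cardS1) -cardS /=.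
have le_double := gamma2t_rook_le_double hn hm.
have [/forallP rows|/forallPn[i]] := boolP [forall i, 0 < row_count S i]; last first.
  rewrite -eqn0Ngt => /eqP/(card_ge_of_empty_row tS); set s := #|S|; lia.
have [/forallP cols|/forallPn[j]] := boolP [forall j, 0 < col_count S j]; last first.
  rewrite -eqn0Ngt => /eqP/(card_ge_of_empty_col tS); set s := #|S|; lia.
have := rook_bound_le_card tS rows cols; rewrite rook_bound_add44.
by have := gamma2t_rook_le_bound hn hm; set s := #|S|; lia.
Qed.
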